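(* Let $0<q<1$, $I=[0,b)$ with $0<b\le\infty$, and let $u_0:I\to\mathbb{R}$ be continuous with $1+(1-q)yu_0(y)>0$ and $1-(1-q)yu_0(qy)>0$ for all $y\in I$. Put $V_0(x)=\partial_qu_0(x)+u_0(x)u_0(qx)$ and, for $t\in\mathbb{R}$, $$w_t(x)=\frac{t\exp\Big(\frac{1}{1-q}\int_0^x\frac1y\ln\frac{1+(1-q)yu_0(y)}{1-(1-q)yu_0(qy)}d_qy\Big)}{1+t\int_0^x\frac{1}{1+(1-q)yu_0(y)}\exp\Big(\frac{1}{1-q}\int_0^y\frac1s\ln\frac{1+(1-q)su_0(s)}{1-(1-q)su_0(qs)}d_qs\Big)d_qy},\qquad u(t,x)=u_0(x)-w_t(x),$$ assuming the denominator does not vanish on $I$. Then, for $x\in I\setminus\{0\}$, $$-\partial_qu(t,x)+u(t,x)u(t,qx)=-\partial_qu_0(x)+u_0(x)u_0(qx),$$ and $$\partial_qu(t,x)+u(t,x)u(t,qx)=V_0(x)-2\,\partial_qw_t(x).$$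
   Context: $\partial_q f(x)=\dfrac{f(x)-f(qx)}{(1-q)x}$ for $x\neq0$ (applied in the variable $x$); $\int_0^x f(t)\,d_qt=\sum_{n\ge0}(1-q)q^nx\,f(q^nx)$ (Jackson $q$-integral). *)

From Stdlib Require Import Reals Lra.
From Coquelicot Require Import Coquelicot.
Open Scope R_scope.

Definition qderiv (q : R) (f : R -> R) (x : R) : R :=
  (f x - f (q * x)) / ((1 - q) * x).

Definition qint (q : R) (f : R -> R) (x : R) : R :=
  Series (fun n : nat => (1 - q) * q ^ n * x * f (q ^ n * x)).

Definition in_I (b : Rbar) (y : R) : Prop := 0 <= y /\ Rbar_lt (Finite y) b.

Definition continuous_on_I (b : Rbar) (f : R -> R) : Prop :=
  forall y, in_I b y -> forall eps, 0 < eps ->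
    exists delta, 0 < delta /\
      forall z, in_I b z -> Rabs (z - y) < delta -> Rabs (f z - f y) < eps.

Definition Eexp (q : R) (u0 : R -> R) (x : R) : R :=
  exp (/ (1 - q) *
       qint q (fun y => / y * ln ((1 + (1 - q) * y * u0 y) /
                                  (1 - (1 - q) * y * u0 (q * y)))) x).

Definition Den (q : R) (u0 : R -> R) (t x : R) : R :=
  1 + t * qint q (fun y => / (1 + (1 - q) * y * u0 y) * Eexp q u0 y) x.

Definition w (q : R) (u0 : R -> R) (t x : R) : R :=
  t * Eexp q u0 x / Den q u0 t x.

Definition u (q : R) (u0 : R -> R) (t x : R) : R := u0 x - w q u0 t x.

Definition V0 (q : R) (u0 : R -> R) (x : R) : R :=
  qderiv q u0 x + u0 x * u0 (q * x).

From Stdlib Require Import Reals Lra Lia.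
From Coquelicot Require Import Coquelicot.
Open Scope R_scope.

(* Splitting off the first term of each Jackson integral gives the q-difference
   relations
     E(x) = (1 + (1-q) x u0(x)) / (1 - (1-q) x u0(qx)) * E(qx),
     Den(x) = Den(qx) + t (1-q) x E(x) / (1 + (1-q) x u0(x)),
   from which w_t = t E / Den satisfies the q-Riccati equation
     d_q w(x) = u0(x) w(qx) + w(x) u0(qx) - w(x) w(qx);
   both identities are rearrangements of this equation.  The Jackson series
   converge because continuity of u0 at 0 bounds both integrands near 0, and
   q^n x eventually lies there. *)

Lemma ln_1p_abs_le (a : R) : Rabs a <= 1/2 -> Rabs (ln (1 + a)) <= 2 * Rabs a.
Proof.
  intros Ha.
  apply Rabs_le_between in Ha.
  assert (Hpos : 0 < 1 + a) by lra.
  assert (Hup : ln (1 + a) <= a).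
  { pose proof (exp_ineq1_le (ln (1 + a))) as H. rewrite exp_ln in H; lra. }
  assert (Hlow : a / (1 + a) <= ln (1 + a)).
  { pose proof (exp_ineq1_le (ln (/ (1 + a)))) as H.
    rewrite exp_ln, ln_Rinv in H by (try apply Rinv_0_lt_compat; lra).
    replace (a / (1 + a)) with (1 - / (1 + a)) by (field; lra). lra. }
  assert (Hlow2 : - (2 * Rabs a) <= a / (1 + a)).
  { apply (Rmult_le_reg_r (1 + a)); [lra|].
    unfold Rdiv; rewrite Rmult_assoc, Rinv_l, Rmult_1_r by lra.
    unfold Rabs; destruct (Rcase_abs a); nra. }
  pose proof (Rle_abs a). apply Rabs_le; lra.
Qed.

Section QIntegral.

Variable q : R.
Hypothesis Hq : 0 < q < 1.

Definition ex_qint (f : R -> R) (x : R) : Prop :=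
  ex_series (fun n : nat => (1 - q) * q ^ n * x * f (q ^ n * x)).

Lemma qorbit_le (y : R) (k : nat) : 0 <= y -> 0 <= q ^ k * y <= y.
Proof.
  intros Hy; induction k as [|k IH]; simpl; [lra|].
  rewrite Rmult_assoc; nra.
Qed.

Lemma ex_qint_eventually_bounded (f : R -> R) (x B : R) (N : nat) :
  (forall n, (N <= n)%nat -> Rabs (f (q ^ n * x)) <= B) -> ex_qint f x.
Proof.
  intros HB; apply (ex_series_incr_n _ N).
  apply (@ex_series_le R_AbsRing R_CompleteNormedModule _
           (fun n => ((1 - q) * q ^ N * Rabs x * B) * q ^ n)).
  - intros n; change norm with Rabs; simpl.
    specialize (HB (N + n)%nat ltac:(lia)).
    rewrite pow_add in *.
    rewrite !Rabs_mult, (Rabs_pos_eq (1 - q)), (Rabs_pos_eq (q ^ N)), (Rabs_pos_eq (q ^ n))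
      by (try apply pow_le; lra).
    assert (0 <= (1 - q) * (q ^ N * q ^ n) * Rabs x).
    { pose proof (pow_le q N ltac:(lra)); pose proof (pow_le q n ltac:(lra)).
      pose proof (Rabs_pos x). repeat apply Rmult_le_pos; lra. }
    nra.
  - apply (ex_series_scal_l _ (fun n => q ^ n)); eexists; apply is_series_geom.
    rewrite Rabs_pos_eq; lra.
Qed.

Lemma ex_qint_bounded_near_0 (f : R -> R) (r B x : R) :
  0 < r -> (forall y, 0 <= y <= r -> Rabs (f y) <= B) -> 0 < x -> ex_qint f x.
Proof.
  intros Hr HB Hx.
  destruct (pow_lt_1_zero q ltac:(rewrite Rabs_pos_eq; lra) (r / x)
              ltac:(apply Rdiv_lt_0_compat; lra)) as [N HN].
  apply (ex_qint_eventually_bounded f x B N); intros n Hn; apply HB.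
  specialize (HN n Hn); rewrite Rabs_pos_eq in HN by (apply pow_le; lra).
  apply (Rmult_lt_compat_r x) in HN; [|lra].
  unfold Rdiv in HN; rewrite Rmult_assoc, Rinv_l, Rmult_1_r in HN by lra.
  pose proof (pow_le q n ltac:(lra)); split; nra.
Qed.

Lemma qint_abs_le (f : R -> R) (y B : R) :
  0 <= y -> (forall k, Rabs (f (q ^ k * y)) <= B) -> Rabs (qint q f y) <= y * B.
Proof.
  intros Hy HB.
  set (a := fun n => (1 - q) * q ^ n * y * f (q ^ n * y)).
  set (g := fun n => ((1 - q) * y * B) * q ^ n).
  assert (Hag : forall n, Rabs (a n) <= g n).
  { intros n; unfold a, g.
    rewrite !Rabs_mult, (Rabs_pos_eq (1 - q)), (Rabs_pos_eq y), (Rabs_pos_eq (q ^ n))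
      by (try apply pow_le; lra).
    pose proof (pow_le q n ltac:(lra)); specialize (HB n).
    assert (0 <= (1 - q) * q ^ n * y) by (repeat apply Rmult_le_pos; lra).
    nra. }
  assert (Hg : is_series g (y * B)).
  { replace (y * B) with (((1 - q) * y * B) * / (1 - q)) by (field; lra).
    apply (is_series_scal_l _ (fun n => q ^ n)), is_series_geom; rewrite Rabs_pos_eq; lra. }
  assert (Habs : ex_series (fun n => Rabs (a n))).
  { apply (@ex_series_le R_AbsRing R_CompleteNormedModule _ g); [|eexists; eauto].
    intros n; change norm with Rabs; simpl; rewrite Rabs_Rabsolu; apply Hag. }
  eapply Rle_trans; [apply Series_Rabs, Habs|].
  rewrite <- (is_series_unique _ _ Hg).
  apply Series_le; [|eexists; eauto].
  intros n; split; [apply Rabs_pos | apply Hag].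
Qed.

Lemma qint_qshift (f : R -> R) (x : R) :
  ex_qint f x -> qint q f x = (1 - q) * x * f x + qint q f (q * x).
Proof.
  intros Hex; unfold qint; rewrite Series_incr_1 by exact Hex.
  simpl; rewrite !Rmult_1_r, Rmult_1_l.
  f_equal; apply Series_ext; intros n; simpl.
  replace (q * q ^ n * x) with (q ^ n * (q * x)) by ring; ring.
Qed.

End QIntegral.

Definition log_ratio (q : R) (u0 : R -> R) (y : R) : R :=
  / y * ln ((1 + (1 - q) * y * u0 y) / (1 - (1 - q) * y * u0 (q * y))).

Definition den_integrand (q : R) (u0 : R -> R) (y : R) : R :=
  / (1 + (1 - q) * y * u0 y) * Eexp q u0 y.

Lemma in_I_le (b : Rbar) (x y : R) : in_I b x -> 0 <= y <= x -> in_I b y.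
Proof.
  intros [_ Hxb] Hy; split; [lra|].
  destruct b as [b| |]; simpl in *; auto; lra.
Qed.

Lemma u0_small_near_0 (q : R) (b : Rbar) (u0 : R -> R) (x : R) :
  0 < q < 1 -> continuous_on_I b u0 -> in_I b x -> 0 < x ->
  exists r M, 0 < r /\ (forall y, 0 <= y <= r -> Rabs (u0 y) <= M) /\
              (1 - q) * r * M <= 1/2.
Proof.
  intros Hq Hc Hx Hxp.
  destruct (Hc 0 (in_I_le b x 0 Hx ltac:(lra)) 1 ltac:(lra)) as [delta [Hdelta Hcont]].
  set (M := Rabs (u0 0) + 1).
  assert (HM : 0 < M) by (pose proof (Rabs_pos (u0 0)); unfold M; lra).
  assert (HqM : 0 < 2 * (1 - q) * M) by (assert (0 < 1 - q) by lra; nra).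
  set (r := Rmin x (Rmin (delta / 2) (/ (2 * (1 - q) * M)))).
  assert (Hrx : r <= x) by apply Rmin_l.
  assert (Hrd : r <= delta / 2) by (eapply Rle_trans; [apply Rmin_r | apply Rmin_l]).
  assert (Hrm : r <= / (2 * (1 - q) * M)) by (eapply Rle_trans; [apply Rmin_r | apply Rmin_r]).
  exists r, M; split; [|split].
  - unfold r; repeat apply Rmin_glb_lt; try lra; now apply Rinv_0_lt_compat.
  - intros y Hy.
    assert (Rabs (u0 y - u0 0) < 1).
    { apply Hcont; [apply (in_I_le b x y Hx); lra|].
      rewrite Rminus_0_r, Rabs_pos_eq; lra. }
    pose proof (Rabs_triang_inv (u0 y) (u0 0)); unfold M; lra.
  - apply (Rmult_le_compat_l (2 * (1 - q) * M)) in Hrm; [|lra].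
    rewrite Rinv_r in Hrm by lra; nra.
Qed.

Section LocalBounds.

Variables (q : R) (u0 : R -> R) (r M : R).
Hypothesis Hq : 0 < q < 1.
Hypothesis Hu0 : forall y, 0 <= y <= r -> Rabs (u0 y) <= M.
Hypothesis Hsmall : (1 - q) * r * M <= 1/2.

Lemma log_ratio_bound (y : R) : 0 <= y <= r -> Rabs (log_ratio q u0 y) <= 4 * (1 - q) * M.
Proof.
  intros Hy.
  assert (HM : 0 <= M) by (pose proof (Hu0 0 ltac:(lra)); pose proof (Rabs_pos (u0 0)); lra).
  (* [/ 0 = 0] in Rocq, so [log_ratio] vanishes at [0]. *)
  destruct (Req_dec y 0) as [->|Hy0].
  { unfold log_ratio; rewrite Rinv_0, Rmult_0_l, Rabs_R0; nra. }
  assert (Hscaled : forall z, 0 <= z <= r -> Rabs ((1 - q) * y * u0 z) <= (1 - q) * y * M).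
  { intros z Hz; rewrite !Rabs_mult, (Rabs_pos_eq (1 - q)), (Rabs_pos_eq y) by lra.
    apply Rmult_le_compat_l; [nra | auto]. }
  assert (Hqy : 0 <= q * y <= r) by nra.
  assert ((1 - q) * y * M <= 1/2) by nra.
  pose proof (Hscaled y Hy) as Ha; pose proof (Hscaled (q * y) Hqy) as Hc.
  set (a := (1 - q) * y * u0 y) in *; set (c := (1 - q) * y * u0 (q * y)) in *.
  pose proof (ln_1p_abs_le a ltac:(lra)) as La.
  pose proof (ln_1p_abs_le (- c) ltac:(rewrite Rabs_Ropp; lra)) as Lc.
  rewrite Rabs_Ropp in Lc.
  pose proof (Rle_abs a); pose proof (Rle_abs (- a)); pose proof (Rle_abs c); pose proof (Rle_abs (- c)).
  rewrite !Rabs_Ropp in *.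
  unfold log_ratio; fold a c.
  replace (1 - c) with (1 + - c) by ring.
  rewrite ln_div by lra.
  rewrite Rabs_mult, Rabs_inv, (Rabs_pos_eq y) by lra.
  apply (Rmult_le_reg_l y); [lra|].
  rewrite <- Rmult_assoc, Rinv_r, Rmult_1_l by lra.
  pose proof (Rabs_triang (ln (1 + a)) (- ln (1 + - c))); rewrite Rabs_Ropp in *.
  unfold Rminus; nra.
Qed.

Lemma Eexp_le (y : R) : 0 <= y <= r -> Eexp q u0 y <= exp (4 * r * M).
Proof.
  intros Hy.
  assert (Hint : Rabs (qint q (log_ratio q u0) y) <= y * (4 * (1 - q) * M)).
  { apply qint_abs_le; [auto | lra |].
    intros k; apply log_ratio_bound; pose proof (qorbit_le q Hq y k); lra. }
  assert (HM : 0 <= M) by (pose proof (Hu0 0 ltac:(lra)); pose proof (Rabs_pos (u0 0)); lra).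
  assert (Hexponent : / (1 - q) * qint q (log_ratio q u0) y <= 4 * r * M).
  { pose proof (Rle_abs (qint q (log_ratio q u0) y)).
    assert (0 < / (1 - q)) by (apply Rinv_0_lt_compat; lra).
    apply Rle_trans with (/ (1 - q) * (y * (4 * (1 - q) * M))); [nra|].
    replace (/ (1 - q) * (y * (4 * (1 - q) * M))) with (4 * y * M) by (field; lra).
    nra. }
  unfold Eexp; fold (log_ratio q u0).
  destruct (Rle_lt_or_eq_dec _ _ Hexponent) as [Hlt | ->]; [|lra].
  now apply Rlt_le, exp_increasing.
Qed.

Lemma den_integrand_bound (y : R) :
  0 <= y <= r -> Rabs (den_integrand q u0 y) <= 2 * exp (4 * r * M).
Proof.
  intros Hy.
  assert (Hhalf : 1/2 <= 1 + (1 - q) * y * u0 y).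
  { pose proof (Hu0 y Hy); pose proof (Rle_abs (- u0 y)); rewrite Rabs_Ropp in *.
    assert (0 <= (1 - q) * y) by (apply Rmult_le_pos; lra).
    assert ((1 - q) * y * M <= (1 - q) * r * M) by
      (apply Rmult_le_compat_r; [pose proof (Rabs_pos (u0 y)); lra | nra]).
    nra. }
  assert (Hinv : 0 < / (1 + (1 - q) * y * u0 y) <= 2).
  { split; [apply Rinv_0_lt_compat; lra|].
    rewrite <- (Rinv_inv 2); apply Rinv_le_contravar; lra. }
  pose proof (Eexp_le y Hy).
  assert (0 < Eexp q u0 y) by apply exp_pos.
  unfold den_integrand; rewrite Rabs_mult, !Rabs_pos_eq by lra.
  nra.
Qed.

End LocalBounds.

Section Recurrences.

Variables (q : R) (u0 : R -> R) (x : R).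
Hypothesis Hq : 0 < q < 1.
Hypothesis Hx : x <> 0.
Hypothesis Hplus : 0 < 1 + (1 - q) * x * u0 x.
Hypothesis Hminus : 0 < 1 - (1 - q) * x * u0 (q * x).

Lemma Eexp_qshift :
  ex_qint q (log_ratio q u0) x ->
  Eexp q u0 x =
    (1 + (1 - q) * x * u0 x) / (1 - (1 - q) * x * u0 (q * x)) * Eexp q u0 (q * x).
Proof.
  intros Hex; unfold Eexp; fold (log_ratio q u0).
  rewrite (qint_qshift q _ _ Hex), Rmult_plus_distr_l, exp_plus.
  f_equal; rewrite <- (exp_ln (_ / _)) by (apply Rdiv_lt_0_compat; lra).
  f_equal; unfold log_ratio; field; lra.
Qed.

Lemma Den_qshift (t : R) :
  ex_qint q (den_integrand q u0) x ->
  Den q u0 t x = Den q u0 t (q * x) + t * (1 - q) * x * den_integrand q u0 x.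
Proof.
  intros Hex; unfold Den; fold (den_integrand q u0).
  rewrite (qint_qshift q _ _ Hex); ring.
Qed.

Lemma w_qRiccati (t : R) :
  ex_qint q (log_ratio q u0) x -> ex_qint q (den_integrand q u0) x ->
  Den q u0 t x <> 0 -> Den q u0 t (q * x) <> 0 ->
  qderiv q (w q u0 t) x =
    u0 x * w q u0 t (q * x) + w q u0 t x * u0 (q * x) - w q u0 t x * w q u0 t (q * x).
Proof.
  intros Hlog Hden HD0 HD1.
  pose proof (Eexp_qshift Hlog) as HE; pose proof (Den_qshift t Hden) as HD.
  unfold den_integrand in HD; rewrite HE in HD.
  assert (Hnum : Den q u0 t (q * x) * (1 - (1 - q) * x * u0 (q * x))
                 + t * (1 - q) * x * Eexp q u0 (q * x) <> 0).
  { replace (Den q u0 t (q * x) * _ + _)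
      with ((1 - (1 - q) * x * u0 (q * x)) * Den q u0 t x) by (rewrite HD; field; lra).
    apply Rmult_integral_contrapositive_currified; lra || auto. }
  unfold qderiv, w; rewrite HD, HE.
  field; repeat split; try lra; auto.
Qed.

End Recurrences.

Lemma qRiccati_pair (q : R) (u0 w : R -> R) (x : R) :
  qderiv q w x = u0 x * w (q * x) + w x * u0 (q * x) - w x * w (q * x) ->
  let v := fun y => u0 y - w y in
  - qderiv q v x + v x * v (q * x) = - qderiv q u0 x + u0 x * u0 (q * x) /\
  qderiv q v x + v x * v (q * x) = V0 q u0 x - 2 * qderiv q w x.
Proof.
  intros Hw v.
  assert (Hv : qderiv q v x = qderiv q u0 x - qderiv q w x)
    by (unfold qderiv, v, Rdiv; ring).
  rewrite Hv; unfold V0, v; rewrite Hw; split; ring.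
Qed.

Theorem mainTheorem8 (q : R) (b : Rbar) (u0 : R -> R) (t : R) :
  0 < q < 1 ->
  Rbar_lt (Finite 0) b ->
  continuous_on_I b u0 ->
  (forall y, in_I b y -> 1 + (1 - q) * y * u0 y > 0) ->
  (forall y, in_I b y -> 1 - (1 - q) * y * u0 (q * y) > 0) ->
  (forall x, in_I b x -> Den q u0 t x <> 0) ->
  forall x, in_I b x -> x <> 0 ->
    - qderiv q (u q u0 t) x + u q u0 t x * u q u0 t (q * x)
      = - qderiv q u0 x + u0 x * u0 (q * x)
    /\
    qderiv q (u q u0 t) x + u q u0 t x * u q u0 t (q * x)
      = V0 q u0 x - 2 * qderiv q (w q u0 t) x.
Proof.
  intros Hq _ Hcont Hplus Hminus HDen x Hx Hx0.
  assert (Hxpos : 0 < x) by (destruct Hx; lra).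
  assert (Hqx : in_I b (q * x)) by (apply (in_I_le b x); [auto | nra]).
  destruct (u0_small_near_0 q b u0 x Hq Hcont Hx Hxpos) as (r & M & Hr & Hu0 & Hsmall).
  apply qRiccati_pair, w_qRiccati; auto.
  - exact (Hplus x Hx).
  - exact (Hminus x Hx).
  - apply (ex_qint_bounded_near_0 q Hq _ r (4 * (1 - q) * M)); auto.
    intros y Hy; apply (log_ratio_bound q u0 r M); auto.
  - apply (ex_qint_bounded_near_0 q Hq _ r (2 * exp (4 * r * M))); auto.
    intros y Hy; apply (den_integrand_bound q u0 r M); auto.
Qed.
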